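(* Let $p=\alpha(\alpha+1)>2$ with $\alpha>0$, let $c_p=\frac{1+z_p}{1-z_p}$, $a_p=h_{c_p}'(z_p)/L_\alpha'(z_p)$, and let $\ell_p$ be the tangent line to the graph of $h_{c_p}$ at $z_p$. Then $a_pL_\alpha$ and $h_{c_p}$ have the same value ($0$) and the same derivative at $z_p$, and on $[z_p,1]$ $$h_{c_p}\le \ell_p\le a_pL_\alpha ,$$ i.e. $\ell_p$ separates the graphs of $a_pL_\alpha$ and $h_{c_p}$ on $(z_p,1)$.
   Context: $L_\alpha$ is the solution on $(-1,1)$ of $(1-s^2)y''-2sy'+\alpha(\alpha+1)y=0$ bounded near $1$ with $L_\alpha(1)=1$ (i.e. ${}_2F_1(-\alpha,\alpha+1;1;\frac{1-s}{2})$); $z_p$ is its largest zero in $(-1,1)$; $h_c(s)=\big(\frac{1+s}{2}\big)^p-c^p\big(\frac{1-s}{2}\big)^p$. *)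

From Stdlib Require Import Reals Lra.
Open Scope R_scope.

(* Real power x^p for p > 0, with the convention 0^p = 0 (Stdlib's Rpower
   gives Rpower 0 p = 1, which is wrong at s = 1 for h_c). *)
Definition rpow (x p : R) : R := if Rlt_dec 0 x then Rpower x p else 0.

Definition hc (p c s : R) : R :=
  rpow ((1 + s) / 2) p - rpow c p * rpow ((1 - s) / 2) p.

Definition is_legendre (alpha : R) (L L1 L2 : R -> R) : Prop :=
  (forall s, -1 < s < 1 ->
     derivable_pt_lim L s (L1 s) /\ derivable_pt_lim L1 s (L2 s) /\
     (1 - s ^ 2) * L2 s - 2 * s * L1 s + alpha * (alpha + 1) * L s = 0) /\
  (forall eps, 0 < eps -> exists delta, 0 < delta /\
     forall s, 1 - delta < s < 1 -> Rabs (L s - 1) < eps) /\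
  L 1 = 1.

Definition is_largest_zero (L : R -> R) (z : R) : Prop :=
  -1 < z < 1 /\ L z = 0 /\ (forall s, z < s < 1 -> L s <> 0).

(* On (z, 1) the Legendre function L is positive, and so are (1 - s^2) L' and, for p > 2,
   (1 - s^2)^2 L'': both decrease by the equation, and a nonpositive value would make L, resp. L',
   blow up at 1.  So L is convex there and stays above its tangent at z, which gives l <= a L.
   The second derivative of h_c changes sign once on (-1, 1), so h_c - l, which vanishes to second
   order at z, stays nonpositive on [z, 1] provided l(1) >= 1 >= h_c(1), i.e.
   p ((1 + z) / 2)^(p - 1) >= 1.  This lower bound on z comes from the barrier W of the equation:
   W' = L G((1 + s) / 2) with G >= 0 as soon as p ((1 + s) / 2)^(p - 1) >= 1, so if the bound
   failed W would be positive and nondecreasing from that point on, while W = O(1 - s) at 1. *)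

From Stdlib Require Import Reals Lra Ranalysis5.
Open Scope R_scope.

Lemma derive_nonneg_le (f f' : R -> R) (a b : R) : a <= b ->
  (forall x, a <= x <= b -> derivable_pt_lim f x (f' x)) ->
  (forall x, a < x < b -> 0 <= f' x) -> f a <= f b.
Proof.
  intros Hab Hd Hpos. destruct (Req_dec a b) as [<-|Hne]; [lra|].
  destruct (MVT_cor2 f f' a b ltac:(lra) Hd) as [c [Hc Hcab]].
  assert (0 <= f' c) by (apply Hpos; lra). nra.
Qed.

Lemma derive_pos_lt (f f' : R -> R) (a b : R) : a < b ->
  (forall x, a <= x <= b -> derivable_pt_lim f x (f' x)) ->
  (forall x, a < x < b -> 0 < f' x) -> f a < f b.
Proof.
  intros Hab Hd Hpos.
  destruct (MVT_cor2 f f' a b Hab Hd) as [c [Hc Hcab]].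
  assert (0 < f' c) by (apply Hpos; lra). nra.
Qed.

Lemma derive_nonpos_ge (f f' : R -> R) (a b : R) : a <= b ->
  (forall x, a <= x <= b -> derivable_pt_lim f x (f' x)) ->
  (forall x, a < x < b -> f' x <= 0) -> f b <= f a.
Proof.
  intros Hab Hd Hneg. destruct (Req_dec a b) as [<-|Hne]; [lra|].
  destruct (MVT_cor2 f f' a b ltac:(lra) Hd) as [c [Hc Hcab]].
  assert (f' c <= 0) by (apply Hneg; lra). nra.
Qed.

Lemma derive_neg_gt (f f' : R -> R) (a b : R) : a < b ->
  (forall x, a <= x <= b -> derivable_pt_lim f x (f' x)) ->
  (forall x, a < x < b -> f' x < 0) -> f b < f a.
Proof.
  intros Hab Hd Hneg.
  destruct (MVT_cor2 f f' a b Hab Hd) as [c [Hc Hcab]].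
  assert (f' c < 0) by (apply Hneg; lra). nra.
Qed.

Lemma tangent_le_of_derive2_nonneg (f f' f'' : R -> R) (a b : R) : a <= b ->
  (forall x, a <= x <= b -> derivable_pt_lim f x (f' x)) ->
  (forall x, a <= x <= b -> derivable_pt_lim f' x (f'' x)) ->
  (forall x, a < x < b -> 0 <= f'' x) ->
  f a + f' a * (b - a) <= f b.
Proof.
  intros Hab Hd Hd2 Hpos. destruct (Req_dec a b) as [<-|Hne]; [lra|].
  destruct (MVT_cor2 f f' a b ltac:(lra) Hd) as [c [Hc Hcab]].
  assert (f' a <= f' c)
    by (apply (derive_nonneg_le f' f''); intros; [lra|apply Hd2|apply Hpos]; lra).
  assert (f' a * (b - a) <= f' c * (b - a)) by (apply Rmult_le_compat_r; lra). lra.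
Qed.

Definition lim_left_one (f : R -> R) (l : R) : Prop :=
  forall eps, 0 < eps -> exists delta, 0 < delta /\
    forall s, 1 - delta < s < 1 -> Rabs (f s - l) < eps.

Lemma lim_left_one_continuity (f : R -> R) : continuity_pt f 1 -> lim_left_one f (f 1).
Proof.
  intros Hc eps Heps. destruct (Hc eps Heps) as [d [Hd Hf]]. exists d. split; [exact Hd|].
  intros s Hs. apply (Hf s). split.
  - split; [exact I | lra].
  - simpl. unfold R_dist. rewrite Rabs_left; lra.
Qed.

Lemma lim_left_one_le (f g : R -> R) (a b x0 : R) : x0 < 1 ->
  lim_left_one f a -> lim_left_one g b -> (forall x, x0 < x < 1 -> f x <= g x) -> a <= b.
Proof.
  intros Hx0 Hf Hg Hfg. destruct (Rle_or_lt a b) as [|Hba]; [assumption|exfalso].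
  destruct (Hf ((a - b) / 2) ltac:(lra)) as [df [Hdf Hf']].
  destruct (Hg ((a - b) / 2) ltac:(lra)) as [dg [Hdg Hg']].
  set (d := Rmin (Rmin df dg) (1 - x0)).
  assert (0 < d) by (apply Rmin_pos; [apply Rmin_pos|]; lra).
  assert (d <= Rmin df dg) by apply Rmin_l. assert (Rmin df dg <= df) by apply Rmin_l.
  assert (Rmin df dg <= dg) by apply Rmin_r. assert (d <= 1 - x0) by apply Rmin_r.
  specialize (Hf' (1 - d / 2) ltac:(lra)). specialize (Hg' (1 - d / 2) ltac:(lra)).
  specialize (Hfg (1 - d / 2) ltac:(lra)).
  apply Rabs_def2 in Hf'. apply Rabs_def2 in Hg'. lra.
Qed.

Lemma lim_left_one_near (f : R -> R) (l : R) : lim_left_one f l ->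
  exists x0, x0 < 1 /\ forall x, x0 < x < 1 -> l - 1 < f x < l + 1.
Proof.
  intros Hf. destruct (Hf 1 Rlt_0_1) as [d [Hd Hf']]. exists (1 - d). split; [lra|].
  intros x Hx. specialize (Hf' x Hx). apply Rabs_def2 in Hf'. lra.
Qed.

Lemma derive_ln_one_minus (s : R) : s < 1 -> derivable_pt_lim (fun x => ln (1 - x)) s (- / (1 - s)).
Proof.
  intros Hs. replace (- / (1 - s)) with (/ (1 - s) * (0 - 1)) by ring.
  apply (derivable_pt_lim_comp (fun x => 1 - x) ln).
  - apply derivable_pt_lim_minus; [apply derivable_pt_lim_const|apply derivable_pt_lim_id].
  - apply derivable_pt_lim_ln. lra.
Qed.

(* [f - d ln (1 - x)] is nonincreasing, and [ln (1 - x)] tends to [-oo]. *)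
Lemma not_bounded_below_of_derive_le (f f' : R -> R) (s d M : R) : s < 1 -> 0 < d ->
  (forall x, s <= x < 1 -> derivable_pt_lim f x (f' x)) ->
  (forall x, s <= x < 1 -> f' x <= - d / (1 - x)) ->
  ~ (forall x, s <= x < 1 -> M <= f x).
Proof.
  intros Hs Hd Hder Hle Hbd.
  assert (Hdecr : forall x, s <= x < 1 -> f x - d * ln (1 - x) <= f s - d * ln (1 - s)).
  { intros x Hx.
    apply (derive_nonpos_ge (fun x => f x - d * ln (1 - x)) (fun x => f' x - d * - / (1 - x))).
    - lra.
    - intros y Hy. apply derivable_pt_lim_minus; [apply Hder; lra|].
      apply derivable_pt_lim_scal, derive_ln_one_minus. lra.
    - intros y Hy. specialize (Hle y ltac:(lra)). unfold Rdiv in Hle. lra. }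
  set (K := ln (1 - s) + Rmin 0 ((M - f s - 1) / d)).
  assert (HK0 : Rmin 0 ((M - f s - 1) / d) <= 0) by apply Rmin_l.
  assert (HK1 : d * Rmin 0 ((M - f s - 1) / d) <= M - f s - 1).
  { assert (H := Rmin_r 0 ((M - f s - 1) / d)). apply (Rmult_le_compat_l d) in H; [|lra].
    replace (d * ((M - f s - 1) / d)) with (M - f s - 1) in H by (field; lra). exact H. }
  assert (HexpK : exp K <= 1 - s).
  { rewrite <- (exp_ln (1 - s)) by lra.
    destruct (Rle_lt_or_eq_dec K (ln (1 - s))) as [HK|HK]; [unfold K; lra| |].
    - left. apply exp_increasing, HK.
    - rewrite HK. lra. }
  assert (Hpos := exp_pos K).
  specialize (Hdecr (1 - exp K) ltac:(lra)). specialize (Hbd (1 - exp K) ltac:(lra)).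
  replace (1 - (1 - exp K)) with (exp K) in Hdecr by ring. rewrite ln_exp in Hdecr.
  assert (d * K = d * ln (1 - s) + d * Rmin 0 ((M - f s - 1) / d)) by (unfold K; ring).
  lra.
Qed.

(* Past a point of nonpositive flux, [y' <= - d / (1 - x)] since [q <= k (1 - x)]. *)
Lemma flux_pos_of_decreasing (y y' q : R -> R) (k s : R) : s < 1 -> 0 < k ->
  (forall x, s <= x < 1 -> derivable_pt_lim y x (y' x)) ->
  (forall x, s < x < 1 -> 0 <= y x) ->
  (forall x, s <= x < 1 -> 0 < q x <= k * (1 - x)) ->
  (forall x x', s <= x -> x < x' -> x' < 1 -> q x' * y' x' < q x * y' x) ->
  0 < q s * y' s.
Proof.
  intros Hs Hk Hder Hy Hq Hdecr.
  destruct (Rlt_or_le 0 (q s * y' s)) as [|Hnp]; [assumption|exfalso].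
  set (s1 := (s + 1) / 2). set (c := q s1 * y' s1).
  assert (Hs1 : s < s1 < 1) by (unfold s1; lra).
  assert (Hc : c < 0) by (specialize (Hdecr s s1); unfold c; lra).
  apply (not_bounded_below_of_derive_le y y' s1 (- c / k) 0).
  - lra.
  - apply Rdiv_lt_0_compat; lra.
  - intros x Hx. apply Hder. lra.
  - intros x Hx.
    assert (Hqy : q x * y' x <= c).
    { destruct (Req_dec x s1) as [->|Hne]; [unfold c; lra|].
      left. apply Hdecr; lra. }
    destruct (Hq x ltac:(lra)) as [Hq0 Hqk].
    assert (y' x * (k * (1 - x)) <= c) by nra.
    replace (- (- c / k) / (1 - x)) with (c / (k * (1 - x))) by (field; lra).
    apply Rmult_le_reg_r with (k * (1 - x)); [nra|].
    unfold Rdiv. rewrite Rmult_assoc, Rinv_l by nra. lra.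
  - intros x Hx. apply Hy. lra.
Qed.

Lemma derive_half_succ (s : R) : derivable_pt_lim (fun x => (1 + x) / 2) s (/ 2).
Proof.
  replace (/ 2) with ((0 + 1) * / 2 + (1 + s) * 0) by ring.
  apply (derivable_pt_lim_mult (fun x => 1 + x) (fun _ => / 2)); [|apply derivable_pt_lim_const].
  apply (derivable_pt_lim_plus (fun _ => 1) id);
    [apply derivable_pt_lim_const|apply derivable_pt_lim_id].
Qed.

Lemma derive_half_pred (s : R) : derivable_pt_lim (fun x => (1 - x) / 2) s (- / 2).
Proof.
  replace (- / 2) with ((0 - 1) * / 2 + (1 - s) * 0) by ring.
  apply (derivable_pt_lim_mult (fun x => 1 - x) (fun _ => / 2)); [|apply derivable_pt_lim_const].
  apply (derivable_pt_lim_minus (fun _ => 1) id);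
    [apply derivable_pt_lim_const|apply derivable_pt_lim_id].
Qed.

Lemma derivable_pt_lim_Rpower_comp (f : R -> R) (q s d : R) : 0 < f s ->
  derivable_pt_lim f s d ->
  derivable_pt_lim (fun x => Rpower (f x) q) s (q * Rpower (f s) (q - 1) * d).
Proof.
  intros Hf Hd. apply (derivable_pt_lim_comp f (fun x => Rpower x q)); [exact Hd|].
  apply derivable_pt_lim_power, Hf.
Qed.

Lemma Rpower_pos (x q : R) : 0 < Rpower x q.
Proof. apply exp_pos. Qed.

Lemma Rpower_base_1 (q : R) : Rpower 1 q = 1.
Proof. unfold Rpower. rewrite ln_1, Rmult_0_r. apply exp_0. Qed.

Lemma Rpower_split_last (x q : R) : 0 < x -> Rpower x q = Rpower x (q - 1) * x.
Proof.
  intros Hx. rewrite <- (Rpower_1 x) at 3 by exact Hx. rewrite <- Rpower_plus. f_equal. ring.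
Qed.

Lemma Rpower_le_1 (x q : R) : 0 <= q -> 0 < x <= 1 -> Rpower x q <= 1.
Proof. intros Hq Hx. rewrite <- (Rpower_base_1 q). apply Rle_Rpower_l; lra. Qed.

Definition ustar (p : R) : R := Rpower p (- / (p - 1)).

Lemma ustar_pow (p : R) : 1 < p -> p * Rpower (ustar p) (p - 1) = 1.
Proof.
  intros Hp. unfold ustar. rewrite Rpower_mult.
  replace (- / (p - 1) * (p - 1)) with (Ropp 1) by (field; lra).
  rewrite Rpower_Ropp, Rpower_1 by lra. field. lra.
Qed.

Lemma ustar_lt_1 (p : R) : 1 < p -> ustar p < 1.
Proof.
  intros Hp. unfold ustar. rewrite <- (Rpower_O p) at 2 by lra. apply Rpower_lt; [lra|].
  assert (0 < / (p - 1)) by (apply Rinv_0_lt_compat; lra). lra.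
Qed.

Lemma ustar_le_pow (p u : R) : 1 < p -> ustar p <= u -> 1 <= p * Rpower u (p - 1).
Proof.
  intros Hp Hu. rewrite <- (ustar_pow p Hp) at 1. apply Rmult_le_compat_l; [lra|].
  apply Rle_Rpower_l; [lra|]. split; [apply Rpower_pos|exact Hu].
Qed.

Definition barrier_rate (p u : R) : R :=
  (p - 1) * (p - 1) * Rpower u (p - 2) - p * (p - 2) * Rpower u (p - 1) - 1.

(* [barrier_rate p u = u ^ (p - 2) * phi u] where [phi] decreases to [phi 1 = 0] as long as
   [p u ^ (p - 1) >= 1]. *)
Lemma barrier_rate_nonneg (p u : R) : 2 <= p -> 0 < u <= 1 -> 1 <= p * Rpower u (p - 1) ->
  0 <= barrier_rate p u.
Proof.
  intros Hp Hu Hpu.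
  set (phi := fun x => (p - 1) * (p - 1) - p * (p - 2) * x - Rpower x (2 - p)).
  assert (Hphi : phi 1 <= phi u).
  { apply (derive_nonpos_ge phi
             (fun x => 0 - p * (p - 2) * 1 - (2 - p) * Rpower x (2 - p - 1))); [lra| |].
    - intros x Hx. apply derivable_pt_lim_minus; [|apply derivable_pt_lim_power; lra].
      apply derivable_pt_lim_minus; [apply derivable_pt_lim_const|].
      apply derivable_pt_lim_scal, derivable_pt_lim_id.
    - intros x Hx.
      replace (2 - p - 1) with (- (p - 1)) by ring. rewrite Rpower_Ropp.
      assert (1 <= p * Rpower x (p - 1)).
      { apply Rle_trans with (1 := Hpu). apply Rmult_le_compat_l; [lra|].
        apply Rle_Rpower_l; lra. }
      assert (Hx0 := Rpower_pos x (p - 1)).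
      assert (/ Rpower x (p - 1) <= p).
      { apply (Rmult_le_reg_r (Rpower x (p - 1))); [lra|]. rewrite Rinv_l; lra. }
      nra. }
  assert (Hphi1 : phi 1 = 0) by (unfold phi; rewrite Rpower_base_1; ring).
  assert (Hfactor : barrier_rate p u = Rpower u (p - 2) * phi u).
  { unfold barrier_rate, phi.
    rewrite (Rpower_split_last u (p - 1)) by lra. replace (p - 1 - 1) with (p - 2) by ring.
    assert (Hinv : Rpower u (p - 2) * Rpower u (2 - p) = 1).
    { rewrite <- Rpower_plus. replace (p - 2 + (2 - p)) with 0 by ring. apply Rpower_O. lra. }
    lra. }
  rewrite Hfactor. apply Rmult_le_pos; [left; apply Rpower_pos|lra].
Qed.

(* Built so that the [L1]-terms of its derivative cancel, using [((1 - s^2) L1)' = - p L]. *)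
Definition barrier (p : R) (L L1 : R -> R) (s : R) : R :=
  (p - 1) * Rpower ((1 + s) / 2) (p - 1) * (1 - s) * L s
  - (Rpower ((1 + s) / 2) (p - 1) - / p) * ((1 - s ^ 2) * L1 s).

Section LargestZero.

Variables (p z : R) (L L1 L2 : R -> R).

Hypothesis legendre_ode : forall s, -1 < s < 1 ->
  derivable_pt_lim L s (L1 s) /\ derivable_pt_lim L1 s (L2 s) /\
  (1 - s ^ 2) * L2 s - 2 * s * L1 s + p * L s = 0.
Hypothesis L_lim : lim_left_one L 1.
Hypothesis z_largest : is_largest_zero L z.

Lemma L_derive (s : R) : -1 < s < 1 -> derivable_pt_lim L s (L1 s).
Proof. intros Hs. apply (legendre_ode s Hs). Qed.

Lemma L1_derive (s : R) : -1 < s < 1 -> derivable_pt_lim L1 s (L2 s).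
Proof. intros Hs. apply (legendre_ode s Hs). Qed.

Lemma L_pos (s : R) : z < s < 1 -> 0 < L s.
Proof.
  intros Hs. destruct z_largest as [Hz [_ Hnz]].
  destruct (Rtotal_order (L s) 0) as [Hneg|[Hzero|Hpos]];
    [|exfalso; exact (Hnz s Hs Hzero)|exact Hpos].
  exfalso. destruct (lim_left_one_near L 1 L_lim) as [x0 [Hx0 Hnear]].
  set (s1 := (Rmax s x0 + 1) / 2).
  assert (Hs1 : s < s1 /\ x0 < s1 < 1).
  { assert (s <= Rmax s x0) by apply Rmax_l. assert (x0 <= Rmax s x0) by apply Rmax_r.
    assert (Rmax s x0 < 1) by (apply Rmax_lub_lt; lra). unfold s1; lra. }
  assert (HLs1 : 0 < L s1) by (specialize (Hnear s1 ltac:(lra)); lra).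
  destruct (IVT_interv L s s1) as [x [Hx HLx]]; [|lra|exact Hneg|exact HLs1|].
  - intros x Hx. apply derivable_continuous_pt. exists (L1 x). apply L_derive. lra.
  - exact (Hnz x ltac:(lra) HLx).
Qed.

Lemma flux_derive (s : R) : -1 < s < 1 ->
  derivable_pt_lim (fun x => (1 - x ^ 2) * L1 x) s (- p * L s).
Proof.
  intros Hs. destruct (legendre_ode s Hs) as [_ [HL1 Hode]].
  replace (- p * L s) with ((0 - INR 2 * s ^ Nat.pred 2) * L1 s + (1 - s ^ 2) * L2 s)
    by (simpl; lra).
  apply (derivable_pt_lim_mult (fun x => 1 - x ^ 2) L1); [|exact HL1].
  apply (derivable_pt_lim_minus (fun _ => 1) (fun x => x ^ 2));
    [apply derivable_pt_lim_const|apply derivable_pt_lim_pow].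
Qed.

Hypothesis p_pos : 0 < p.

Lemma flux_pos (s : R) : z <= s < 1 -> 0 < (1 - s ^ 2) * L1 s.
Proof.
  intros Hs. destruct z_largest as [Hz _].
  apply (flux_pos_of_decreasing L L1 (fun x => 1 - x ^ 2) 2 s); [lra|lra| | | |].
  - intros x Hx. apply L_derive. lra.
  - intros x Hx. left. apply L_pos. lra.
  - intros x Hx. nra.
  - intros x x' Hx Hxx' Hx'.
    apply (derive_neg_gt (fun x => (1 - x ^ 2) * L1 x) (fun x => - p * L x)); [lra| |].
    + intros y Hy. apply flux_derive. lra.
    + intros y Hy. assert (0 < L y) by (apply L_pos; lra). nra.
Qed.

Lemma L1_pos (s : R) : z <= s < 1 -> 0 < L1 s.
Proof.
  intros Hs. destruct z_largest as [Hz _]. assert (H := flux_pos s Hs).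
  assert (0 < 1 - s ^ 2) by nra.
  destruct (Rlt_or_le 0 (L1 s)) as [|Hn]; [assumption|nra].
Qed.

Lemma flux2_derive (s : R) : -1 < s < 1 ->
  derivable_pt_lim (fun x => (1 - x ^ 2) * (2 * x * L1 x - p * L x)) s
    ((1 - s ^ 2) * (2 - p) * L1 s).
Proof.
  intros Hs. destruct (legendre_ode s Hs) as [HL [HL1 Hode]].
  replace ((1 - s ^ 2) * (2 - p) * L1 s) with
    ((0 - INR 2 * s ^ Nat.pred 2) * (2 * s * L1 s - p * L s)
     + (1 - s ^ 2) * ((2 * 1 * L1 s + 2 * s * L2 s) - p * L1 s)).
  2:{ simpl. nra. }
  apply (derivable_pt_lim_mult (fun x => 1 - x ^ 2) (fun x => 2 * x * L1 x - p * L x)).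
  - apply (derivable_pt_lim_minus (fun _ => 1) (fun x => x ^ 2));
      [apply derivable_pt_lim_const|apply derivable_pt_lim_pow].
  - apply (derivable_pt_lim_minus (fun x => 2 * x * L1 x) (fun x => p * L x)).
    + apply (derivable_pt_lim_mult (fun x => 2 * x) L1); [|exact HL1].
      apply derivable_pt_lim_scal, derivable_pt_lim_id.
    + apply derivable_pt_lim_scal, HL.
Qed.

Lemma barrier_derive (s : R) : -1 < s < 1 ->
  derivable_pt_lim (barrier p L L1) s (L s * barrier_rate p ((1 + s) / 2)).
Proof.
  intros Hs.
  assert (DU := derivable_pt_lim_Rpower_comp (fun x => (1 + x) / 2) (p - 1) s (/ 2)
                  ltac:(lra) (derive_half_succ s)).
  assert (D := derivable_pt_lim_minus _ _ s _ _
    (derivable_pt_lim_mult _ L s _ _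
       (derivable_pt_lim_mult _ (fun x => 1 - x) s _ _ (derivable_pt_lim_scal _ (p - 1) s _ DU)
          (derivable_pt_lim_minus (fun _ => 1) id s _ _ (derivable_pt_lim_const 1 s)
             (derivable_pt_lim_id s)))
       (L_derive s Hs))
    (derivable_pt_lim_mult _ _ s _ _
       (derivable_pt_lim_minus _ (fun _ => / p) s _ _ DU (derivable_pt_lim_const (/ p) s))
       (flux_derive s Hs))).
  match type of D with derivable_pt_lim _ _ ?l =>
    replace (L s * barrier_rate p ((1 + s) / 2)) with l; [exact D|] end.
  cbv beta delta [mult_real_fct mult_fct minus_fct].
  set (u := (1 + s) / 2). set (B := Rpower u (p - 2)).
  assert (E1 : Rpower u (p - 1 - 1) = B) by (unfold B; f_equal; ring).
  assert (E2 : Rpower u (p - 1) = B * u).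
  { rewrite <- E1. apply Rpower_split_last. unfold u; lra. }
  unfold barrier_rate. fold B. rewrite E1, E2. unfold u. field. lra.
Qed.

Hypothesis p_gt_2 : 2 < p.

Lemma L2_pos (s : R) : z <= s < 1 -> 0 < L2 s.
Proof.
  intros Hs. destruct z_largest as [Hz _].
  assert (Hode : forall x, -1 < x < 1 ->
    (1 - x ^ 2) ^ 2 * L2 x = (1 - x ^ 2) * (2 * x * L1 x - p * L x)).
  { intros x Hx. destruct (legendre_ode x Hx) as [_ [_ H]].
    replace (2 * x * L1 x - p * L x) with ((1 - x ^ 2) * L2 x) by lra. ring. }
  assert (H : 0 < (1 - s ^ 2) ^ 2 * L2 s).
  { apply (flux_pos_of_decreasing L1 L2 (fun x => (1 - x ^ 2) ^ 2) 8 s); [lra|lra| | | |].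
    - intros x Hx. apply L1_derive. lra.
    - intros x Hx. left. apply L1_pos. lra.
    - intros x Hx. assert (0 < 1 - x) by lra. assert (0 < 1 + x) by lra.
      assert ((1 - x) * (1 + x) ^ 2 <= 8) by nra.
      replace ((1 - x ^ 2) ^ 2) with ((1 - x) * ((1 - x) * (1 + x) ^ 2)) by ring.
      split; [apply Rmult_lt_0_compat; [lra|apply Rmult_lt_0_compat; nra]|].
      rewrite (Rmult_comm 8). apply Rmult_le_compat_l; lra.
    - intros x x' Hx Hxx' Hx'. rewrite (Hode x), (Hode x') by lra.
      apply (derive_neg_gt (fun x => (1 - x ^ 2) * (2 * x * L1 x - p * L x))
               (fun x => (1 - x ^ 2) * (2 - p) * L1 x)); [lra| |].
      + intros y Hy. apply flux2_derive. lra.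
      + intros y Hy. assert (0 < L1 y) by (apply L1_pos; lra).
        assert (0 < 1 - y ^ 2) by nra.
        assert (0 < (1 - y ^ 2) * L1 y) by (apply Rmult_lt_0_compat; lra). nra. }
  assert (0 < (1 - s ^ 2) ^ 2) by (apply pow_lt; nra).
  destruct (Rlt_or_le 0 (L2 s)) as [|Hn]; [assumption|nra].
Qed.

Lemma L_ge_tangent (s : R) : z <= s < 1 -> L1 z * (s - z) <= L s.
Proof.
  intros Hs. destruct z_largest as [Hz [HLz _]].
  assert (H := tangent_le_of_derive2_nonneg L L1 L2 z s).
  rewrite HLz in H. enough (0 + L1 z * (s - z) <= L s) by lra.
  apply H; [lra| | |].
  - intros x Hx. apply L_derive. lra.
  - intros x Hx. apply L1_derive. lra.
  - intros x Hx. left. apply L2_pos. lra.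
Qed.

Lemma L1_zero_le : L1 z * (1 - z) <= 1.
Proof.
  destruct z_largest as [Hz _].
  apply (lim_left_one_le (fun x => L1 z * (x - z)) L _ 1 z); [lra| |exact L_lim|].
  - apply (lim_left_one_continuity (fun x => L1 z * (x - z))). reg.
  - intros x Hx. apply L_ge_tangent. lra.
Qed.

Lemma barrier_nondecreasing (x y : R) : z <= x -> x <= y -> y < 1 -> ustar p <= (1 + x) / 2 ->
  barrier p L L1 x <= barrier p L L1 y.
Proof.
  intros Hzx Hxy Hy Hx. destruct z_largest as [Hz _].
  apply (derive_nonneg_le _ (fun t => L t * barrier_rate p ((1 + t) / 2))); [lra| |].
  - intros t Ht. apply barrier_derive. lra.
  - intros t Ht. apply Rmult_le_pos; [left; apply L_pos; lra|].
    assert (0 < ustar p) by apply Rpower_pos.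
    apply barrier_rate_nonneg; [lra|lra|apply ustar_le_pow; lra].
Qed.

Lemma barrier_le_near_one : exists x0, x0 < 1 /\ forall x, x0 < x < 1 -> z <= x ->
  ustar p <= (1 + x) / 2 -> barrier p L L1 x <= 2 * (p - 1) * (1 - x).
Proof.
  destruct (lim_left_one_near L 1 L_lim) as [x0 [Hx0 Hnear]].
  exists x0. split; [exact Hx0|]. intros x Hx Hzx Hux. unfold barrier.
  assert (0 < ustar p) by apply Rpower_pos.
  assert (HU1 : Rpower ((1 + x) / 2) (p - 1) <= 1) by (apply Rpower_le_1; lra).
  assert (HUp : / p <= Rpower ((1 + x) / 2) (p - 1)).
  { apply (Rmult_le_reg_l p); [lra|]. rewrite Rinv_r by lra. apply ustar_le_pow; lra. }
  assert (Hw := flux_pos x ltac:(lra)). specialize (Hnear x Hx).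
  assert (0 <= (Rpower ((1 + x) / 2) (p - 1) - / p) * ((1 - x ^ 2) * L1 x))
    by (apply Rmult_le_pos; lra).
  assert (Rpower ((1 + x) / 2) (p - 1) * ((1 - x) * L x) <= 1 * ((1 - x) * 2)).
  { apply Rmult_le_compat; [left; apply Rpower_pos|nra|lra|].
    apply Rmult_le_compat_l; lra. }
  nra.
Qed.

Lemma zero_lower_bound : 1 <= p * Rpower ((1 + z) / 2) (p - 1).
Proof.
  destruct z_largest as [Hz _].
  destruct (Rle_or_lt (ustar p) ((1 + z) / 2)) as [Hle|Hlt]; [apply ustar_le_pow; lra|exfalso].
  assert (Hus := ustar_pow p ltac:(lra)). assert (Hus1 := ustar_lt_1 p ltac:(lra)).
  set (s0 := 2 * ustar p - 1).
  assert (Es0 : s0 = 2 * ustar p - 1) by reflexivity.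
  assert (Hpos0 : 0 < barrier p L L1 s0).
  { unfold barrier. replace ((1 + s0) / 2) with (ustar p) by (rewrite Es0; field).
    replace (Rpower (ustar p) (p - 1)) with (/ p)
      by (apply (Rmult_eq_reg_l p); [rewrite Hus; field|]; lra).
    assert (0 < L s0) by (apply L_pos; lra).
    assert (0 < (p - 1) * / p * (1 - s0) * L s0).
    { repeat apply Rmult_lt_0_compat; try lra. apply Rinv_0_lt_compat; lra. }
    lra. }
  destruct barrier_le_near_one as [x0 [Hx0 Hnear]].
  assert (barrier p L L1 s0 <= 2 * (p - 1) * (1 - 1)).
  { apply (lim_left_one_le (fun _ => barrier p L L1 s0) (fun x => 2 * (p - 1) * (1 - x))
             _ _ (Rmax s0 x0)); [apply Rmax_lub_lt; lra| | |].
    - apply (lim_left_one_continuity (fun _ => barrier p L L1 s0)). reg.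
    - apply (lim_left_one_continuity (fun x => 2 * (p - 1) * (1 - x))). reg.
    - intros x Hx. assert (s0 <= Rmax s0 x0) by apply Rmax_l.
      assert (x0 <= Rmax s0 x0) by apply Rmax_r.
      apply Rle_trans with (barrier p L L1 x);
        [apply barrier_nondecreasing|apply Hnear]; lra. }
  lra.
Qed.

End LargestZero.

Lemma concave_convex_nonpos (g g' g'' : R -> R) (z K : R) : z < 1 ->
  (forall x, z <= x < 1 -> derivable_pt_lim g x (g' x)) ->
  (forall x, z <= x < 1 -> derivable_pt_lim g' x (g'' x)) ->
  (forall a b, z < a -> a <= b -> b < 1 -> 0 < g'' a -> 0 < g'' b) ->
  g z = 0 -> g' z = 0 ->
  (forall x, z < x < 1 -> g x <= K * (1 - x)) ->
  forall s, z <= s < 1 -> g s <= 0.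
Proof.
  intros Hz Hd Hd2 Hsign Hg0 Hg'0 Hbound s Hs.
  destruct (Rle_or_lt (g s) 0) as [|Hgs]; [assumption|exfalso].
  assert (Hzs : z < s) by (destruct (Req_dec z s) as [<-|]; lra).
  destruct (MVT_cor2 g g' z s Hzs) as [x1 [Hx1 Hx1r]]; [intros; apply Hd; lra|].
  assert (Hg'x1 : 0 < g' x1) by nra.
  destruct (MVT_cor2 g' g'' z x1) as [y1 [Hy1 Hy1r]]; [lra|intros; apply Hd2; lra|].
  assert (Hg''y1 : 0 < g'' y1) by nra.
  (* once [g''] is positive it stays so: [g'] and then [g] increase on [[x1, 1)] *)
  assert (Hg'pos : forall x, x1 <= x < 1 -> 0 < g' x).
  { intros x Hx. destruct (Req_dec x1 x) as [<-|]; [lra|].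
    assert (g' x1 < g' x); [|lra].
    apply (derive_pos_lt g' g''); [lra|intros; apply Hd2; lra|].
    intros y Hy. apply (Hsign y1 y); lra. }
  assert (Hincr : forall x, s < x < 1 -> g s <= g x).
  { intros x Hx. apply (derive_nonneg_le g g'); [lra|intros; apply Hd; lra|].
    intros y Hy. left. apply Hg'pos. lra. }
  assert (g s <= K * (1 - 1)).
  { apply (lim_left_one_le (fun _ => g s) (fun x => K * (1 - x)) _ _ s); [lra| | |].
    - apply (lim_left_one_continuity (fun _ => g s)). reg.
    - apply (lim_left_one_continuity (fun x => K * (1 - x))). reg.
    - intros x Hx. apply Rle_trans with (g x); [apply Hincr|apply Hbound]; lra. }
  lra.
Qed.

Definition hc_deriv (p c s : R) : R :=
  p / 2 * (Rpower ((1 + s) / 2) (p - 1) + Rpower c p * Rpower ((1 - s) / 2) (p - 1)).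

Definition hc_deriv2 (p c s : R) : R :=
  p * (p - 1) / 4 * (Rpower ((1 + s) / 2) (p - 2) - Rpower c p * Rpower ((1 - s) / 2) (p - 2)).

Lemma rpow_nonneg (x q : R) : 0 <= rpow x q.
Proof. unfold rpow. destruct (Rlt_dec 0 x); [left; apply Rpower_pos|lra]. Qed.

Lemma hc_le_1 (p c s : R) : 0 <= p -> s <= 1 -> hc p c s <= 1.
Proof.
  intros Hp Hs. unfold hc.
  assert (0 <= rpow c p * rpow ((1 - s) / 2) p) by (apply Rmult_le_pos; apply rpow_nonneg).
  assert (rpow ((1 + s) / 2) p <= 1).
  { unfold rpow. destruct (Rlt_dec 0 ((1 + s) / 2)); [apply Rpower_le_1; lra|lra]. }
  lra.
Qed.

Lemma hc_interior (p c s : R) : 0 < c -> -1 < s < 1 ->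
  hc p c s = Rpower ((1 + s) / 2) p - Rpower c p * Rpower ((1 - s) / 2) p.
Proof.
  intros Hc Hs. unfold hc, rpow.
  destruct (Rlt_dec 0 ((1 + s) / 2)); [|lra]. destruct (Rlt_dec 0 c); [|lra].
  destruct (Rlt_dec 0 ((1 - s) / 2)); [|lra]. reflexivity.
Qed.

Lemma hc_derive (p c s : R) : 0 < c -> -1 < s < 1 ->
  derivable_pt_lim (hc p c) s (hc_deriv p c s).
Proof.
  intros Hc Hs.
  apply (derivable_pt_lim_locally_ext
           (fun x => Rpower ((1 + x) / 2) p - Rpower c p * Rpower ((1 - x) / 2) p) _ s (-1) 1);
    [lra|intros x Hx; symmetry; apply hc_interior; lra|].
  replace (hc_deriv p c s) with
    (p * Rpower ((1 + s) / 2) (p - 1) * / 2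
     - Rpower c p * (p * Rpower ((1 - s) / 2) (p - 1) * - / 2)) by (unfold hc_deriv; field).
  apply derivable_pt_lim_minus; [|apply derivable_pt_lim_scal].
  - apply (derivable_pt_lim_Rpower_comp (fun x => (1 + x) / 2)); [lra|apply derive_half_succ].
  - apply (derivable_pt_lim_Rpower_comp (fun x => (1 - x) / 2)); [lra|apply derive_half_pred].
Qed.

Lemma hc_deriv_derive (p c s : R) : -1 < s < 1 ->
  derivable_pt_lim (hc_deriv p c) s (hc_deriv2 p c s).
Proof.
  intros Hs.
  replace (hc_deriv2 p c s) with
    (p / 2 * ((p - 1) * Rpower ((1 + s) / 2) (p - 1 - 1) * / 2
              + Rpower c p * ((p - 1) * Rpower ((1 - s) / 2) (p - 1 - 1) * - / 2))).
  2:{ unfold hc_deriv2. replace (p - 1 - 1) with (p - 2) by ring. field. }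
  apply derivable_pt_lim_scal, derivable_pt_lim_plus; [|apply derivable_pt_lim_scal].
  - apply (derivable_pt_lim_Rpower_comp (fun x => (1 + x) / 2)); [lra|apply derive_half_succ].
  - apply (derivable_pt_lim_Rpower_comp (fun x => (1 - x) / 2)); [lra|apply derive_half_pred].
Qed.

Lemma hc_deriv2_pos_mono (p c a b : R) : 2 <= p -> -1 < a -> a <= b -> b < 1 ->
  0 < hc_deriv2 p c a -> 0 < hc_deriv2 p c b.
Proof.
  intros Hp Ha Hab Hb. unfold hc_deriv2.
  assert (Hk : 0 < p * (p - 1) / 4) by nra.
  assert (Rpower ((1 + a) / 2) (p - 2) <= Rpower ((1 + b) / 2) (p - 2))
    by (apply Rle_Rpower_l; lra).
  assert (Rpower ((1 - b) / 2) (p - 2) <= Rpower ((1 - a) / 2) (p - 2))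
    by (apply Rle_Rpower_l; lra).
  assert (Hc := Rpower_pos c p).
  intros Ha2. apply Rmult_lt_0_compat; [lra|].
  assert (0 < Rpower ((1 + a) / 2) (p - 2) - Rpower c p * Rpower ((1 - a) / 2) (p - 2)) by nra.
  nra.
Qed.

Lemma Rpower_div (x y q : R) : 0 < x -> 0 < y -> Rpower (x / y) q = Rpower x q / Rpower y q.
Proof.
  intros Hx Hy. unfold Rdiv. rewrite <- Rpower_mult_distr by (try apply Rinv_0_lt_compat; lra).
  f_equal. unfold Rpower. rewrite ln_Rinv, <- exp_Ropp by exact Hy. f_equal. ring.
Qed.

Lemma hc_at_zero (p z : R) : -1 < z < 1 -> hc p ((1 + z) / (1 - z)) z = 0.
Proof.
  intros Hz. rewrite hc_interior by (try apply Rdiv_lt_0_compat; lra).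
  replace ((1 + z) / (1 - z)) with (((1 + z) / 2) / ((1 - z) / 2)) by (field; lra).
  rewrite (Rpower_div ((1 + z) / 2) ((1 - z) / 2)) by lra.
  assert (H := Rpower_pos ((1 - z) / 2) p). field. lra.
Qed.

Lemma hc_deriv_at_zero (p z : R) : -1 < z < 1 ->
  hc_deriv p ((1 + z) / (1 - z)) z * (1 - z) = p * Rpower ((1 + z) / 2) (p - 1).
Proof.
  intros Hz. unfold hc_deriv.
  replace ((1 + z) / (1 - z)) with (((1 + z) / 2) / ((1 - z) / 2)) by (field; lra).
  rewrite (Rpower_div ((1 + z) / 2) ((1 - z) / 2)) by lra.
  rewrite (Rpower_split_last ((1 + z) / 2) p), (Rpower_split_last ((1 - z) / 2) p) by lra.
  assert (H := Rpower_pos ((1 - z) / 2) (p - 1)). field. lra.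
Qed.

(* The hypothesis on [z] says the tangent is at least [1] at [s = 1], while [hc <= 1]. *)
Lemma hc_le_tangent (p z : R) : 2 <= p -> -1 < z < 1 -> 1 <= p * Rpower ((1 + z) / 2) (p - 1) ->
  forall s, z <= s <= 1 ->
  hc p ((1 + z) / (1 - z)) s <= hc_deriv p ((1 + z) / (1 - z)) z * (s - z).
Proof.
  intros Hp Hz Hkey s Hs. set (c := (1 + z) / (1 - z)).
  assert (Ec : c = (1 + z) / (1 - z)) by reflexivity.
  assert (Hc : 0 < c) by (rewrite Ec; apply Rdiv_lt_0_compat; lra).
  set (dh := hc_deriv p c z).
  assert (Hslope : 1 <= dh * (1 - z)) by (unfold dh; rewrite Ec, hc_deriv_at_zero; lra).
  destruct (Req_dec s 1) as [->|Hs1]; [assert (hc p c 1 <= 1) by (apply hc_le_1; lra); lra|].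
  enough (hc p c s - dh * (s - z) <= 0) by lra.
  apply (concave_convex_nonpos (fun x => hc p c x - dh * (x - z)) (fun x => hc_deriv p c x - dh)
           (hc_deriv2 p c) z dh); [lra| | | | | | |lra].
  - intros x Hx. replace (hc_deriv p c x - dh) with (hc_deriv p c x - dh * (1 - 0)) by ring.
    apply derivable_pt_lim_minus; [apply hc_derive; lra|].
    apply derivable_pt_lim_scal, derivable_pt_lim_minus;
      [apply derivable_pt_lim_id|apply derivable_pt_lim_const].
  - intros x Hx. replace (hc_deriv2 p c x) with (hc_deriv2 p c x - 0) by ring.
    apply derivable_pt_lim_minus; [apply hc_deriv_derive; lra|apply derivable_pt_lim_const].
  - intros a b Ha Hab Hb. apply hc_deriv2_pos_mono; lra.
  - rewrite Ec, hc_at_zero by lra. ring.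
  - unfold dh. ring.
  - intros x Hx. assert (hc p c x <= 1) by (apply hc_le_1; lra). lra.
Qed.

Theorem lemma5p5 (alpha p : R) (L L1 L2 : R -> R) (z c a dh : R) :
  0 < alpha -> p = alpha * (alpha + 1) -> 2 < p ->
  is_legendre alpha L L1 L2 ->
  is_largest_zero L z ->
  c = (1 + z) / (1 - z) ->
  derivable_pt_lim (hc p c) z dh ->
  a = dh / L1 z ->
  (a * L z = 0 /\ hc p c z = 0 /\ L1 z <> 0 /\
   derivable_pt_lim (fun s => a * L s) z dh) /\
  (forall s, z <= s <= 1 ->
     hc p c s <= hc p c z + dh * (s - z) /\
     hc p c z + dh * (s - z) <= a * L s).
Proof.
  intros _ Hp Hp2 [Hder [Hlim HL1]] Hlz Hc Hdh Ha.
  assert (Hode : forall s, -1 < s < 1 ->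
    derivable_pt_lim L s (L1 s) /\ derivable_pt_lim L1 s (L2 s) /\
    (1 - s ^ 2) * L2 s - 2 * s * L1 s + p * L s = 0) by (rewrite Hp; exact Hder).
  pose proof Hlz as [Hz [HLz _]].
  assert (Hkey := zero_lower_bound p z L L1 L2 Hode Hlim Hlz ltac:(lra) Hp2).
  assert (Edh : dh = hc_deriv p c z).
  { apply (uniqueness_limite (hc p c) z); [exact Hdh|].
    apply hc_derive; [rewrite Hc; apply Rdiv_lt_0_compat|]; lra. }
  assert (Hslope : dh * (1 - z) = p * Rpower ((1 + z) / 2) (p - 1))
    by (rewrite Edh, Hc; apply hc_deriv_at_zero, Hz).
  assert (HL1z : 0 < L1 z) by (apply (L1_pos p z L L1 L2 Hode Hlim Hlz); lra).
  assert (Hdh_a : dh = a * L1 z) by (rewrite Ha; field; lra).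
  assert (Ha0 : 0 < a) by (rewrite Ha; apply Rdiv_lt_0_compat; nra).
  assert (Hhz : hc p c z = 0) by (rewrite Hc; apply hc_at_zero, Hz).
  split; [repeat split|intros s Hs; rewrite Hhz, Rplus_0_l; split].
  - rewrite HLz. ring.
  - exact Hhz.
  - lra.
  - rewrite Hdh_a. apply derivable_pt_lim_scal, Hder, Hz.
  - rewrite Edh, Hc. apply hc_le_tangent; lra.
  - rewrite Hdh_a, Rmult_assoc. apply Rmult_le_compat_l; [lra|].
    destruct (Req_dec s 1) as [->|Hs1].
    + rewrite HL1. apply (L1_zero_le p z L L1 L2 Hode Hlim Hlz); lra.
    + apply (L_ge_tangent p z L L1 L2 Hode Hlim Hlz); lra.
Qed.
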